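(* Let $s\ge 1$ be real, let $Y\subseteq V$ be nonempty and let $X\subseteq Y$. Then $X$ is $s$-sparse in $Y$ if and only if $|Y_k\cap X|<k/s$ for every integer $k=1,2,\dots,|Y|$. In particular, if $X$ is $s$-sparse in $Y$, then $|X|<|Y|/s$.
   Context: Let $G$ be a finite graph with vertex set $V$, $|V|=n$, and $t=\chi_f(G)$. Fix a weight function $w:V\to\mathbb{R}_{\ge0}$ with $w(V)=t$ and $w(I)\le 1$ for every independent set $I$ of $G$, where $w(A)=\sum_{v\in A}w(v)$. List the vertices as $v_1,\dots,v_n$ so that $w(v_{i+1})\le w(v_i)$ for all $i$. Every subset $X\subseteq V$ is ordered according to this ordering of $V$, and $X_k$ denotes the set of the first $k$ elements of $X$; for real $s\ge1$, $X_s:=X_{\lfloor s\rfloor}$. For real $s\ge1$ and $Y\subseteq V$, a nonempty subset $X\subseteq Y$ is called $s$-principal in $Y$ if $X\subseteq Y_{s|X|}$ (i.e., all elements of $X$ are among the first $\lfloor s|X|\rfloor$ elements of $Y$). A subset $X\subseteq Y$ is called $s$-sparse in $Y$ if $X$ contains no subset that is $s$-principal in $Y$. *)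

From mathcomp Require Import all_boot all_order all_algebra.
From mathcomp Require Import reals.
Set Implicit Arguments. Unset Strict Implicit. Unset Printing Implicit Defensive.
Import Order.TTheory GRing.Theory Num.Theory.
Local Open Scope ring_scope.

(* The vertex set V is 'I_n; vertex i is v_(i+1) in the paper's listing,
   so the ordering of V is the natural order of indices. *)

Definition simple_graph (n : nat) (G : rel 'I_n) : Prop :=
  symmetric G /\ irreflexive G.

Definition independent (n : nat) (G : rel 'I_n) (I : {set 'I_n}) : bool :=
  [forall x in I, forall y in I, ~~ G x y].

Definition wt (R : realType) (n : nat) (w : 'I_n -> R) (A : {set 'I_n}) : R :=
  \sum_(v in A) w v.

Definition frac_colouring (R : realType) (n : nat) (G : rel 'I_n)
  (y : {set 'I_n} -> R) : Prop :=
  (forall I, 0 <= y I) /\ (forall I, ~~ independent G I -> y I = 0) /\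
  (forall v : 'I_n, 1 <= \sum_(I : {set 'I_n} | v \in I) y I).

Definition is_frac_chromatic (R : realType) (n : nat) (G : rel 'I_n) (t : R)
  : Prop :=
  (exists2 y, frac_colouring G y & \sum_I y I = t) /\
  (forall y, frac_colouring G y -> t <= \sum_I y I).

(* Y_k : the first k elements of Y (in the order of V). *)
Definition firstk (n : nat) (Y : {set 'I_n}) (k : nat) : {set 'I_n} :=
  [set y in Y | #|[set z in Y | (z <= y)%N]| <= k]%N.

Definition firstr (R : realType) (n : nat) (Y : {set 'I_n}) (s : R)
  : {set 'I_n} :=
  firstk Y `|Num.floor s|%N.

Definition principal (R : realType) (n : nat) (s : R) (Y X : {set 'I_n}) : bool :=
  [&& X != set0, X \subset Y & X \subset firstr Y (s * #|X|%:R)].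

Definition sparse (R : realType) (n : nat) (s : R) (Y X : {set 'I_n}) : bool :=
  (X \subset Y) && [forall Z : {set 'I_n}, (Z \subset X) ==> ~~ principal s Y Z].

(* Sparseness only has to be tested on the sets Y_k ∩ X: a subset Z ⊆ X that is
   s-principal lies in Y_k for k = min(⌊s|Z|⌋, |Y|), so Y_k ∩ X is at least as
   large as Z, while conversely Y_k ∩ X is itself s-principal as soon as
   s|Y_k ∩ X| ≥ k.  Taking k = |Y| gives the bound on |X|. *)
From mathcomp Require Import all_boot all_order all_algebra.
From mathcomp Require Import reals.
Set Implicit Arguments. Unset Strict Implicit. Unset Printing Implicit Defensive.
Import Order.TTheory GRing.Theory Num.Theory.
Local Open Scope ring_scope.

Lemma leq_abs_floor (R : realType) (x : R) (k : nat) :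
  0 <= x -> (k <= `|Num.floor x|)%N = (k%:R <= x).
Proof. by move=> x0; rewrite -truncn_ge_nat // truncn_floor x0. Qed.

Section FirstK.

Variables (n : nat) (Y : {set 'I_n}).

Lemma firstk_subset k : firstk Y k \subset Y.
Proof. by apply/subsetP => y; rewrite inE => /andP[]. Qed.

Lemma subset_firstk k k' : (k <= k')%N -> firstk Y k \subset firstk Y k'.
Proof.
move=> le_kk'; apply/subsetP => y; rewrite !inE => /andP[-> le_rank_k] /=.
exact: leq_trans le_kk'.
Qed.

Lemma rank_le_card y : (#|[set z in Y | (z <= y)%N]| <= #|Y|)%N.
Proof. by apply/subset_leq_card/subsetP => z; rewrite inE => /andP[]. Qed.

Lemma firstk_card : firstk Y #|Y| = Y.
Proof. by apply/setP => y; rewrite inE rank_le_card andbT. Qed.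

Lemma firstk_minn_card k : firstk Y (minn k #|Y|) = firstk Y k.
Proof. by apply/setP => y; rewrite !inE leq_min rank_le_card andbT. Qed.

End FirstK.

Section Sparse.

Variables (R : realType) (n : nat) (s : R) (Y X : {set 'I_n}).

Lemma principal_firstkI k : (0 < k)%N ->
  k%:R <= s * #|firstk Y k :&: X|%:R -> principal s Y (firstk Y k :&: X).
Proof.
set Z := firstk Y k :&: X => k_gt0 le_k_sZ.
have sZ_ge0 : 0 <= s * #|Z|%:R by apply: le_trans le_k_sZ.
apply/and3P; split.
- rewrite -card_gt0 lt0n; apply: contraTneq le_k_sZ => ->.
  by rewrite mulr0 -ltNge ltr0n.
- exact: subset_trans (subsetIl _ _) (firstk_subset _ _).
- apply: subset_trans (subsetIl _ _) (subset_firstk _ _).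
  by rewrite leq_abs_floor.
Qed.

Lemma principal_sub_firstk Z : 1 <= s -> principal s Y Z ->
  exists2 k, (0 < k <= #|Y|)%N & (k%:R <= s * #|Z|%:R) && (Z \subset firstk Y k).
Proof.
move=> s_ge1 /and3P[Z_neq0 ZY Z_first].
have sZ_ge1 : 1 <= s * #|Z|%:R.
  by rewrite mulr_ege1 // ler1n card_gt0.
have sZ_ge0 : 0 <= s * #|Z|%:R by apply: le_trans sZ_ge1.
exists (minn `|Num.floor (s * #|Z|%:R)|%N #|Y|).
  have Y_gt0 : (0 < #|Y|)%N by rewrite (leq_trans _ (subset_leq_card ZY)) ?card_gt0.
  by rewrite leq_min geq_minr leq_abs_floor // Y_gt0 sZ_ge1.
by rewrite firstk_minn_card Z_first andbT -leq_abs_floor // geq_minl.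
Qed.

Lemma sparse_firstkP : 1 <= s -> X \subset Y ->
  sparse s Y X <->
  (forall k : nat, (1 <= k <= #|Y|)%N -> #|firstk Y k :&: X|%:R < k%:R / s).
Proof.
move=> s_ge1 XY; have s_gt0 : 0 < s by apply: lt_le_trans s_ge1.
have ltr_divs m k : (m%:R < k%:R / s) = ~~ (k%:R <= s * m%:R).
  by rewrite ltr_pdivlMr // mulrC ltNge.
split.
- move=> /andP[_ /forallP sparseX] k /andP[k_gt0 _]; rewrite ltr_divs.
  apply: contraNN (implyP (sparseX _) (subsetIr _ _)).
  exact: principal_firstkI.
- move=> small_firstk; rewrite /sparse XY; apply/forallP => Z.
  apply/implyP => ZX; apply/negP => /(principal_sub_firstk s_ge1)[k k_range].
  case/andP=> le_k_sZ Z_first; have := small_firstk k k_range.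
  rewrite ltr_divs (le_trans le_k_sZ) // ler_pM2l // ler_nat.
  by rewrite subset_leq_card // subsetI Z_first.
Qed.

Lemma sparse_card_lt : 1 <= s -> Y != set0 -> X \subset Y ->
  sparse s Y X -> #|X|%:R < #|Y|%:R / s.
Proof.
move=> s_ge1 Y_neq0 XY /(sparse_firstkP s_ge1 XY) /(_ #|Y|).
by rewrite firstk_card (setIidPr XY) card_gt0 Y_neq0 leqnn; apply.
Qed.

End Sparse.

Theorem lemma3 (R : realType) (n : nat) (G : rel 'I_n) (t : R)
  (w : 'I_n -> R) (s : R) (Y X : {set 'I_n}) :
  simple_graph G ->
  is_frac_chromatic G t ->
  (forall v, 0 <= w v) ->
  wt w [set: 'I_n] = t ->
  (forall I, independent G I -> wt w I <= 1) ->
  (forall i j : 'I_n, (i <= j)%N -> w j <= w i) ->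
  1 <= s ->
  Y != set0 ->
  X \subset Y ->
  (sparse s Y X <->
     (forall k : nat, (1 <= k <= #|Y|)%N ->
        (#|firstk Y k :&: X|%:R < k%:R / s))) /\
  (sparse s Y X -> #|X|%:R < #|Y|%:R / s).
Proof.
move=> _ _ _ _ _ _ s_ge1 Y_neq0 XY.
by split; [exact: sparse_firstkP | exact: sparse_card_lt].
Qed.
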